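(* Consider the discrete-time linear system monitored by a network of $p$ nodes $$x[t+1]=Ax[t],\qquad y_i[t]=C_ix[t]+e_i[t],\quad i\in\{1,\dots,p\},\ t\in\mathbb{N},$$ with $x[t]\in\mathbb{R}^n$, $A\in\mathbb{R}^{n\times n}$, $C_i\in\mathbb{R}^{1\times n}$ (so each measurement $y_i[t]\in\mathbb{R}$ is a scalar), and let $C\in\mathbb{R}^{p\times n}$ be the matrix with rows $C_1,\dots,C_p$. Suppose: (i) the nodes communicate over a time-invariant, undirected, connected graph with Laplacian $\mathcal{L}$; (ii) an adversary attacks a fixed (time-invariant) set of at most $s$ nodes, unknown to the nodes; for an attacked node $i$ the signal $e_i[t]$ is arbitrary, while $e_i[t]=0$ for all $t$ for every attack-free node; the adversary is omniscient (it knows the system model, the algorithms run at the nodes, the state and all measurements); (iii) $A$ and all matrices $C_1,\dots,C_p$ are known to every node; (iv) the adversary can only alter the measurements of attacked nodes; every node (attacked or not) executes its algorithm correctly; (v) for every eigenvalue $m+n'\mathbf{i}$ of $A$ with $|m+n'\mathbf{i}|\ge 1$ and every non-zero eigenvalue $\lambda$ of $\mathcal{L}$, $\left(m-\frac{\lambda^2}{\lambda_{\max}^2(\mathcal{L})}\right)^2+n'^2<1$, where $\lambda_{\max}(\mathcal{L})$ is the largest eigenvalue of $\mathcal{L}$. Then the decentralized secure state-tracking problem for this system and network is solvable if and only if the pair $(A,C)$ is $2s$-sparse detectable.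
   Context: Decentralized secure state-tracking (DSST) problem: find an algorithm run at each node $i$, whose inputs are node $i$'s own measurements $y_i$ and messages received from its neighbours in the communication graph, and whose output is an estimate $\hat x_i[t]\in\mathbb{R}^n$, such that for every initial state $x[0]\in\mathbb{R}^n$ and every admissible attack as in (ii), $\lim_{t\to\infty}\|\hat x_i[t]-x[t]\|=0$ for every node $i$. The problem is solvable if such an algorithm exists. A pair $(A,M)$ is detectable if every eigenvalue of $A$ of modulus $\ge 1$ is observable for $(A,M)$, i.e. $Mv\neq 0$ for every (complex) eigenvector $v$ of $A$ associated with an eigenvalue of modulus $\ge1$. Let $\mathbf{E}_p=\{\mathbf{e}_1,\dots,\mathbf{e}_p\}$ be the standard basis of $\mathbb{R}^p$. For $k\in\mathbb{N}$ let $\mathbf{Q}_k$ be the set of all real matrices $L$ with $p$ columns (any number of rows) such that $\ker(L)=\mathrm{span}\,V$ for some $V\subseteq\mathbf{E}_p$ with $|V|\le k$. The system is $k$-sparse detectable if $(A,LC)$ is detectable for every $L\in\mathbf{Q}_k$ (equivalently, $(A,C_{\mathcal K})$ is detectable for every set $\mathcal{K}$ of at least $p-k$ rows of $C$). *)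

From HB Require Import structures.
From mathcomp Require Import all_boot all_order all_algebra.
From mathcomp Require Import complex.
From mathcomp Require Import all_classical all_reals topology normedtype sequences.

Set Implicit Arguments.
Unset Strict Implicit.
Unset Printing Implicit Defensive.

Import Order.TTheory GRing.Theory Num.Theory.
Import numFieldNormedType.Exports.
Local Open Scope classical_set_scope.
Local Open Scope ring_scope.

Section DSST.
Variable R : realType.

Definition cplx_mx (m k : nat) (M : 'M[R]_(m, k)) : 'M[R[i]]_(m, k) :=
  map_mx (fun r => (r%:C)%C) M.

Definition cmod (mu : R[i]) : R := Num.sqrt (complex.Re mu ^+ 2 + complex.Im mu ^+ 2).

Definition detectable (n q : nat) (A : 'M[R]_n) (M : 'M[R]_(q, n)) : Prop :=
  forall (mu : R[i]) (v : 'cV[R[i]]_n),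
    v != 0 -> cplx_mx A *m v = mu *: v -> 1 <= cmod mu ->
    cplx_mx M *m v != 0.

(** L belongs to Q_k : L has p columns and ker L = span {e_j | j in V} for some
    V with |V| <= k.  span {e_j | j in V} is the set of vectors supported in V. *)
Definition in_Qk (p k r : nat) (L : 'M[R]_(r, p)) : Prop :=
  exists V : {set 'I_p}, (#|V| <= k)%N /\
    forall w : 'cV[R]_p, L *m w = 0 <-> (forall j, j \notin V -> w j 0 = 0).

Definition sparse_detectable (n p k : nat) (A : 'M[R]_n) (C : 'M[R]_(p, n)) : Prop :=
  forall (r : nat) (L : 'M[R]_(r, p)), in_Qk k L -> detectable A (L *m C).

Definition laplacian (p : nat) (adj : rel 'I_p) : 'M[R]_p :=
  \matrix_(i, j) (if i == j then (#|[set k | adj i k]|)%:R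
                  else if adj i j then -1 else 0).

Definition real_eig (p : nat) (M : 'M[R]_p) (lam : R) : Prop :=
  exists v : 'cV[R]_p, v != 0 /\ M *m v = lam *: v.

Definition is_max_eig (p : nat) (M : 'M[R]_p) (lmax : R) : Prop :=
  real_eig M lmax /\ forall lam, real_eig M lam -> lam <= lmax.

Definition cond_v (n p : nat) (A : 'M[R]_n) (Lap : 'M[R]_p) : Prop :=
  forall lmax : R, is_max_eig Lap lmax ->
  forall (mu : R[i]) (v : 'cV[R[i]]_n), v != 0 -> cplx_mx A *m v = mu *: v ->
    1 <= cmod mu ->
  forall lam : R, real_eig Lap lam -> lam != 0 ->
    (complex.Re mu - lam ^+ 2 / lmax ^+ 2) ^+ 2 + complex.Im mu ^+ 2 < 1.

(** A decentralized algorithm (one communication round per time step). *)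
Record algorithm (p n : nat) := Algorithm {
  st : Type;
  msg : Type;
  init : 'I_p -> st;
  (* send j i z y : message from node j to node i *)
  send : 'I_p -> 'I_p -> st -> R -> msg;
  upd : 'I_p -> st -> R -> ('I_p -> option msg) -> st;
  out : 'I_p -> st -> R -> 'cV[R]_n
}.

Fixpoint run (p n : nat) (adj : rel 'I_p) (alg : algorithm p n)
    (y : 'I_p -> nat -> R) (t : nat) : 'I_p -> st alg :=
  match t with
  | 0 => @init p n alg
  | t'.+1 => fun i =>
      @upd p n alg i (run adj alg y t' i) (y i t')
        (fun j => if adj i j then Some (@send p n alg j i (run adj alg y t' j) (y j t'))
                  else None)
  end.

Definition estimate (p n : nat) (adj : rel 'I_p) (alg : algorithm p n)
    (y : 'I_p -> nat -> R) (i : 'I_p) (t : nat) : 'cV[R]_n :=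
  @out p n alg i (run adj alg y t i) (y i t).

Definition traj (n : nat) (A : 'M[R]_n) (x0 : 'cV[R]_n) (t : nat) : 'cV[R]_n :=
  A ^+ t *m x0.

Definition meas (n p : nat) (A : 'M[R]_n) (C : 'M[R]_(p, n)) (x0 : 'cV[R]_n)
    (e : 'I_p -> nat -> R) (i : 'I_p) (t : nat) : R :=
  (row i C *m traj A x0 t) 0 0 + e i t.

Definition DSST_solvable (n p : nat) (A : 'M[R]_n) (C : 'M[R]_(p, n))
    (adj : rel 'I_p) (s : nat) : Prop :=
  exists alg : algorithm p n,
    forall (x0 : 'cV[R]_n) (S : {set 'I_p}) (e : 'I_p -> nat -> R),
      (#|S| <= s)%N ->
      (forall i, i \notin S -> forall t, e i t = 0) ->
      forall i : 'I_p,
        (fun t => `| estimate adj alg (meas A C x0 e) i t - traj A x0 t |)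
          @ \oo --> (0 : R).

End DSST.

From HB Require Import structures.
From mathcomp Require Import all_boot all_order all_algebra.
From mathcomp Require Import complex.
From mathcomp Require Import all_classical all_reals topology normedtype sequences.
From mathcomp Require Import fingraph.
From mathcomp Require Import lra zify.

Set Implicit Arguments.
Unset Strict Implicit.
Unset Printing Implicit Defensive.

Import Order.TTheory GRing.Theory Num.Theory.
Import numFieldNormedType.Exports.
Local Open Scope classical_set_scope.
Local Open Scope ring_scope.

(* Necessity: if (A, C) is not 2s-sparse detectable, the real or imaginary part w
   of an undetectable eigenvector is a non-vanishing state whose outputs vanish
   outside a set of at most 2s nodes.  Split that set into halves V1 and V2:
   attacking V1 from x[0] = w and V2 from x[0] = 0 produces the same
   measurements, so no algorithm tracks both trajectories.
   Sufficiency: the nodes flood their measurements through the connected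
   network, so at time t every node knows all measurements up to t - p.  It
   then picks a set K of at least p - s nodes whose measurements are explained
   by some initial state.  By finiteness this choice, and by Cayley-Hamilton the
   explaining state, eventually stabilise; the difference between that state
   and the true one is unobservable through the at least p - 2s honest nodes of
   K, hence its orbit vanishes by 2s-sparse detectability. *)

Section Contraction.
Variable R : realType.

Lemma contraction_cvg0 (a b : R^nat) (q : R) : 0 <= q -> q < 1 ->
  (forall t, 0 <= a t) -> (forall t, a t.+1 <= q * a t + b t) ->
  b @ \oo --> 0 -> a @ \oo --> 0.
Proof.
move=> q0 q1 a0 a_next /cvgr0Pnorm_lt b0; apply/cvgr0Pnorm_lt => e e0.
have e1 : 0 < e * (1 - q) / 2 by rewrite divr_gt0 // mulr_gt0 // subr_gt0.
have [N _ small_b] := b0 _ e1.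
have a_after k : a (N + k)%N <= q ^+ k * a N + e / 2.
  elim: k => [|k IH]; first by rewrite addn0 expr0 mul1r lerDl; lra.
  have bk : b (N + k)%N <= e * (1 - q) / 2.
    exact: le_trans (ler_norm _) (ltW (small_b _ (leq_addr _ _))).
  have := ler_wpM2l q0 IH; rewrite addnS exprS; have := a_next (N + k)%N; lra.
pose d := e / 2 / (a N + 1).
have aN1 : 0 < a N + 1 by have := a0 N; lra.
have d_def : d * (a N + 1) = e / 2 by rewrite /d mulfVK // lt0r_neq0.
have q_lt1 : `|q| < 1 by rewrite ger0_norm.
have d_gt0 : 0 < d by rewrite !divr_gt0.
have [M _ small_q] := (cvgr0Pnorm_lt _).1 (cvg_expr q_lt1) d d_gt0.
exists (N + M)%N => // t /= NMt; have le_Nt := leq_trans (leq_addr M N) NMt.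
rewrite -(subnKC le_Nt) ger0_norm //.
have qt : q ^+ (t - N) < d.
  by apply: le_lt_trans (ler_norm _) (small_q _ _); rewrite /= leq_subRL.
have := a0 N; have := a_after (t - N)%N; have := exprn_ge0 (t - N) q0; nra.
Qed.

End Contraction.

Section ComplexVectors.
Variable R : realType.

Lemma cmodE (z : R[i]) : ((cmod z)%:C)%C = `|z|.
Proof. by rewrite normc_def. Qed.

Lemma cmod_ge0 (z : R[i]) : 0 <= cmod z.
Proof. exact: sqrtr_ge0. Qed.

Lemma cmodM (x y : R[i]) : cmod (x * y) = cmod x * cmod y.
Proof. by apply: (@complexI R); rewrite rmorphM /= !cmodE normrM. Qed.

Lemma cmodX (x : R[i]) k : cmod (x ^+ k) = cmod x ^+ k.
Proof. by apply: (@complexI R); rewrite rmorphXn /= !cmodE normrX. Qed.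

Lemma cmodD (x y : R[i]) : cmod (x + y) <= cmod x + cmod y.
Proof. by rewrite -lecR rmorphD /= !cmodE ler_normD. Qed.

Lemma cmod_eq0 (z : R[i]) : (cmod z == 0) = (z == 0).
Proof. by rewrite -(inj_eq (@complexI R)) cmodE normr_eq0. Qed.

Lemma cmod_real (r : R) : cmod (r%:C)%C = `|r|.
Proof. by rewrite /cmod /= expr0n addr0 sqrtr_sqr. Qed.

Lemma cmod_le_ReIm (z : R[i]) : cmod z <= `|complex.Re z| + `|complex.Im z|.
Proof.
case: z => a b; rewrite /cmod /= -[X in _ <= X]ger0_norm ?addr_ge0 //.
rewrite -sqrtr_sqr ler_sqrt ?sqr_ge0 // sqrrD !real_normK ?num_real //.
by rewrite addrAC lerDl mulrn_wge0 // mulr_ge0.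
Qed.

Definition cnorm1 n (v : 'cV[R[i]]_n) : R := \sum_i cmod (v i 0).

Lemma cnorm10 n : cnorm1 (0 : 'cV[R[i]]_n) = 0.
Proof. by rewrite /cnorm1 big1 // => i _; rewrite mxE /cmod /= expr0n addr0 sqrtr0. Qed.

Lemma cnorm1_ge0 n (v : 'cV[R[i]]_n) : 0 <= cnorm1 v.
Proof. by apply: sumr_ge0 => i _; apply: cmod_ge0. Qed.

Lemma cnorm1D n (u v : 'cV[R[i]]_n) : cnorm1 (u + v) <= cnorm1 u + cnorm1 v.
Proof. by rewrite -big_split ler_sum // => i _; rewrite mxE cmodD. Qed.

Lemma cnorm1Z n (a : R[i]) (v : 'cV[R[i]]_n) : cnorm1 (a *: v) = cmod a * cnorm1 v.
Proof. by rewrite /cnorm1 mulr_sumr; apply: eq_bigr => i _; rewrite mxE cmodM. Qed.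

Lemma cnorm1_gt0 n (v : 'cV[R[i]]_n) : v != 0 -> 0 < cnorm1 v.
Proof.
move=> v_neq0; rewrite lt_def cnorm1_ge0 andbT; apply: contra v_neq0 => /eqP v0.
apply/eqP/matrixP => i j; rewrite (ord1 j) mxE; apply/eqP.
by rewrite -cmod_eq0; apply/eqP/(psumr_eq0P _ v0) => // k _; apply: cmod_ge0.
Qed.

Lemma mx_norm_entry m n (M : 'M[R]_(m, n)) i j : `|M i j| <= `|M|.
Proof. by rewrite [leRHS]mx_normrE (le_bigmax _ _ (i, j)). Qed.

Definition Re_mx m n (M : 'M[R[i]]_(m, n)) : 'M[R]_(m, n) := map_mx (@complex.Re R) M.
Definition Im_mx m n (M : 'M[R[i]]_(m, n)) : 'M[R]_(m, n) := map_mx (@complex.Im R) M.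

Lemma cnorm1_le_ReIm n (v : 'cV[R[i]]_n) :
  cnorm1 v <= (`|Re_mx v| + `|Im_mx v|) *+ n.
Proof.
rewrite -[X in _ *+ X](card_ord n) -sumr_const ler_sum // => i _.
apply: le_trans (cmod_le_ReIm _) (lerD _ _).
  by have := mx_norm_entry (Re_mx v) i 0; rewrite mxE.
by have := mx_norm_entry (Im_mx v) i 0; rewrite mxE.
Qed.

Lemma cnorm1_cplx n (w : 'cV[R]_n) : `|w| <= cnorm1 (cplx_mx w).
Proof.
rewrite [leLHS]mx_normrE; apply: bigmax_le => [|[i j] _]; first exact: cnorm1_ge0.
rewrite (ord1 j) /cnorm1 (bigD1 i) //= mxE cmod_real lerDl.
by apply: sumr_ge0 => k _; apply: cmod_ge0.
Qed.

Lemma cplx_mxM m n k (A : 'M[R]_(m, n)) (B : 'M[R]_(n, k)) :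
  cplx_mx (A *m B) = cplx_mx A *m cplx_mx B.
Proof. exact: (map_mxM (real_complex R)). Qed.

Lemma cplx_mxX n (A : 'M[R]_n) t : cplx_mx (A ^+ t) = cplx_mx A ^+ t.
Proof.
elim: t => [|t IH]; first by apply/matrixP => i j; rewrite !mxE; case: (i == j).
by rewrite !exprS -!mulmxE cplx_mxM IH.
Qed.

Lemma Re_mx_cplxM m n k (A : 'M[R]_(m, n)) (v : 'M[R[i]]_(n, k)) :
  Re_mx (cplx_mx A *m v) = A *m Re_mx v.
Proof.
apply/matrixP => a b; rewrite !mxE.
apply: (big_ind2 (fun x y => complex.Re x = y)) => //.
  by move=> [x1 x2] y1 [z1 z2] y2 /= -> ->.
by move=> c _; rewrite !mxE; case: (v c b) => z1 z2 /=; rewrite mul0r subr0.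
Qed.

Lemma Im_mx_cplxM m n k (A : 'M[R]_(m, n)) (v : 'M[R[i]]_(n, k)) :
  Im_mx (cplx_mx A *m v) = A *m Im_mx v.
Proof.
apply/matrixP => a b; rewrite !mxE.
apply: (big_ind2 (fun x y => complex.Im x = y)) => //.
  by move=> [x1 x2] y1 [z1 z2] y2 /= -> ->.
by move=> c _; rewrite !mxE; case: (v c b) => z1 z2 /=; rewrite mul0r addr0.
Qed.

End ComplexVectors.

Definition unobservable (F : pzRingType) n m (B : 'M[F]_n) (N : 'M[F]_(m, n))
    (y : 'cV[F]_n) : Prop :=
  forall t, N *m (B ^+ t *m y) = 0.

Lemma eigenvector_exp (F : comPzRingType) n (B : 'M[F]_n) (v : 'cV[F]_n) a :
  B *m v = a *: v -> forall t, B ^+ t *m v = a ^+ t *: v.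
Proof.
move=> Bv; elim=> [|t IH]; first by rewrite expr0 mul1mx scale1r.
by rewrite exprSr -mulmxE -mulmxA Bv -scalemxAr IH scalerA -exprS.
Qed.

Section HornerUnobservable.
Variables (F : fieldType) (n m : nat).
Implicit Types (B : 'M[F]_n.+1) (N : 'M[F]_(m, n.+1)) (y : 'cV[F]_n.+1).

Lemma horner_mx_sum B (q : {poly F}) :
  horner_mx B q = \sum_(i < size q) q`_i *: B ^+ i.
Proof.
rewrite -{1}[q]coefK poly_def raddf_sum; apply: eq_bigr => i _.
have := horner_mxZ B (q`_i) 'X^i; rewrite /= => ->.
by rewrite rmorphXn /= horner_mx_X.
Qed.

Lemma mulmx_horner_eq0 B N y (q : {poly F}) :
  (forall i, (i < size q)%N -> N *m (B ^+ i *m y) = 0) ->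
  N *m (horner_mx B q *m y) = 0.
Proof.
move=> Ny0; rewrite horner_mx_sum mulmx_suml mulmx_sumr big1 // => i _.
by rewrite -scalemxAl -scalemxAr Ny0 ?scaler0.
Qed.

Lemma unobservable_horner B N y (q : {poly F}) :
  unobservable B N y -> unobservable B N (horner_mx B q *m y).
Proof.
move=> unobs t.
have -> : B ^+ t *m (horner_mx B q *m y) = horner_mx B ('X^t * q) *m y.
  by rewrite rmorphM rmorphXn /= horner_mx_X -mulmxE mulmxA.
by apply: mulmx_horner_eq0 => i _; apply: unobs.
Qed.

End HornerUnobservable.

(* Cayley-Hamilton: B ^+ t is a polynomial in B of degree < n. *)
Lemma unobservable_first_powers (F : fieldType) n m (B : 'M[F]_n)
    (N : 'M[F]_(m, n)) (y : 'cV[F]_n) :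
  (forall t, (t < n)%N -> N *m (B ^+ t *m y) = 0) -> unobservable B N y.
Proof.
case: n B N y => [|n] B N y Ny0 t; first by rewrite [y]flatmx0 !mulmx0.
have -> : B ^+ t = horner_mx B ('X^t %% char_poly B).
  have := congr1 (horner_mx B) (divp_eq 'X^t (char_poly B)).
  by rewrite rmorphD rmorphM /= Cayley_Hamilton mulr0 add0r rmorphXn /= horner_mx_X.
apply: mulmx_horner_eq0 => i lt_i; apply: Ny0; apply: leq_trans lt_i _.
by rewrite -ltnS -(size_char_poly B) ltn_modp monic_neq0 ?char_poly_monic.
Qed.

Section Spectral.
Variable R : realType.

Definition vanishing n (A : 'M[R]_n) (w : 'cV[R]_n) : Prop :=
  (fun t => `|A ^+ t *m w|) @ \oo --> (0 : R).

Lemma horner_mx_XsubC n (B : 'M[R[i]]_n.+1) (mu : R[i]) :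
  horner_mx B ('X - mu%:P) = B - mu%:M.
Proof. by rewrite rmorphB /= horner_mx_X horner_mx_C. Qed.

Lemma stable_factor_cvg0 n (B : 'M[R[i]]_n.+1) (l : seq R[i]) (x : 'cV_n.+1) :
  all (fun mu => cmod mu < 1) l ->
  horner_mx B (\prod_(mu <- l) ('X - mu%:P)) *m x = 0 ->
  (fun t => cnorm1 (B ^+ t *m x)) @ \oo --> 0.
Proof.
elim: l x => [|mu l IH] x /=.
  move=> _; rewrite big_nil rmorph1 mul1mx => ->.
  by under eq_fun do rewrite mulmx0 cnorm10; apply: cvg_cst.
case/andP=> mu_lt1 l_lt1; rewrite big_cons mulrC rmorphM /= -mulmxE -mulmxA.
rewrite horner_mx_XsubC => /(IH _ l_lt1) {}IH.
apply: (contraction_cvg0 (cmod_ge0 mu) mu_lt1 _ _ IH) => [t|t]; first exact: cnorm1_ge0.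
have -> : B ^+ t.+1 *m x = mu *: (B ^+ t *m x) + B ^+ t *m ((B - mu%:M) *m x).
  rewrite mulmxBl mulmxBr mul_scalar_mx -scalemxAr addrC subrK mulmxA.
  by rewrite mulmxE -exprSr.
by rewrite -cnorm1Z cnorm1D.
Qed.

Section Detectable.
Variables (n r : nat) (A : 'M[R]_n.+1) (M : 'M[R]_(r, n.+1)).
Hypothesis detAM : detectable A M.

Lemma detectable_unstable_factor_eq0 (l : seq R[i]) (y : 'cV_n.+1) :
  all (fun mu => 1 <= cmod mu) l -> unobservable (cplx_mx A) (cplx_mx M) y ->
  horner_mx (cplx_mx A) (\prod_(mu <- l) ('X - mu%:P)) *m y = 0 -> y = 0.
Proof.
elim: l y => [|mu l IH] y /=; first by rewrite big_nil rmorph1 mul1mx.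
case/andP=> mu_ge1 l_ge1 unobs_y; rewrite big_cons rmorphM /= -mulmxE -mulmxA.
set z := horner_mx _ _ *m y; rewrite horner_mx_XsubC => z_eig.
apply: (IH _ l_ge1 unobs_y); apply/eqP; apply: contraT => z_neq0.
have Az : cplx_mx A *m z = mu *: z.
  by apply/eqP; rewrite -subr_eq0 -mul_scalar_mx -mulmxBl z_eig.
have := unobservable_horner (\prod_(mu <- l) ('X - mu%:P)) unobs_y 0%N.
by rewrite expr0 mul1mx -/z => Mz0; move: (detAM z_neq0 Az mu_ge1); rewrite Mz0 eqxx.
Qed.

End Detectable.

(* Factor the characteristic polynomial over C.  By detectability the factors
   of the roots of modulus >= 1 are injective on unobservable vectors, so by
   Cayley-Hamilton the product of the stable factors annihilates w. *)
Lemma detectable_unobservable_vanishing n r (A : 'M[R]_n) (M : 'M[R]_(r, n))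
    (w : 'cV[R]_n) :
  detectable A M -> unobservable A M w -> vanishing A w.
Proof.
case: n A M w => [|n] A M w detAM unobs_w.
  by rewrite /vanishing; under eq_fun do rewrite flatmx0 normr0; apply: cvg_cst.
set Ac := cplx_mx A; set wc := cplx_mx w.
have [rs char_rs] := closed_field_poly_normal (char_poly Ac).
rewrite (monicP (char_poly_monic _)) scale1r in char_rs.
set unstable := [seq mu <- rs | 1 <= cmod mu].
set stable := [seq mu <- rs | ~~ (1 <= cmod mu)].
have CH : horner_mx Ac (\prod_(mu <- unstable) ('X - mu%:P) *
                        \prod_(mu <- stable) ('X - mu%:P)) = 0.
  have := Cayley_Hamilton Ac; rewrite char_rs (bigID (fun mu => 1 <= cmod mu)).
  by rewrite !big_filter.
have wc_unobs : unobservable Ac (cplx_mx M) wc.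
  by move=> t; rewrite -cplx_mxX -!cplx_mxM unobs_w; apply/matrixP => i j; rewrite !mxE.
have stable_wc : horner_mx Ac (\prod_(mu <- stable) ('X - mu%:P)) *m wc = 0.
  apply: (detectable_unstable_factor_eq0 detAM (l := unstable)).
  - by apply/allP => mu; rewrite mem_filter => /andP[].
  - exact: unobservable_horner.
  - by have := congr1 (mulmx^~ wc) CH; rewrite rmorphM -mulmxE -mulmxA mul0mx.
have stable_lt1 : all (fun mu => cmod mu < 1) stable.
  by apply/allP => mu; rewrite mem_filter ltNge => /andP[].
apply: (squeeze_cvgr _ (cvg_cst 0) (stable_factor_cvg0 stable_lt1 stable_wc)).
by near=> t; rewrite normr_ge0 /= /Ac /wc -cplx_mxX -cplx_mxM cnorm1_cplx.
Unshelve. all: by end_near.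
Qed.

Section Eigenvectors.
Variables (n : nat) (A : 'M[R]_n) (mu : R[i]) (v : 'cV[R[i]]_n).
Hypothesis Av : cplx_mx A *m v = mu *: v.

Lemma eigenvector_parts_unobservable r (N : 'M[R]_(r, n)) :
  cplx_mx N *m v = 0 -> unobservable A N (Re_mx v) /\ unobservable A N (Im_mx v).
Proof.
move=> Nv; have NAv t : cplx_mx N *m (cplx_mx (A ^+ t) *m v) = 0.
  by rewrite cplx_mxX (eigenvector_exp Av) -scalemxAr Nv scaler0.
by split=> t; rewrite -!(Re_mx_cplxM, Im_mx_cplxM) NAv; apply/matrixP => i j; rewrite !mxE.
Qed.

Lemma eigenvector_parts_not_vanishing : v != 0 -> 1 <= cmod mu ->
  ~ (vanishing A (Re_mx v) /\ vanishing A (Im_mx v)).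
Proof.
move=> v_neq0 mu_ge1 [re0 im0].
have bound t : cnorm1 v <= (`|A ^+ t *m Re_mx v| + `|A ^+ t *m Im_mx v|) *+ n.
  rewrite -Re_mx_cplxM -Im_mx_cplxM cplx_mxX (eigenvector_exp Av).
  apply: le_trans (cnorm1_le_ReIm _).
  by rewrite cnorm1Z cmodX ler_peMl ?cnorm1_ge0 // exprn_ege1.
have lim0 : (fun t => (`|A ^+ t *m Re_mx v| + `|A ^+ t *m Im_mx v|) *+ n)
    @ \oo --> (0 : R).
  by rewrite -[0 : R](mul0rn _ n) -[X in X *+ n](addr0 0); apply: cvgMn; apply: cvgD.
have [N _ /(_ N (leqnn N)) /=] := (cvgr0Pnorm_lt _).1 lim0 _ (cnorm1_gt0 v_neq0).
by rewrite ltNge (le_trans (bound N) (ler_norm _)).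
Qed.

End Eigenvectors.

End Spectral.

Section Flooding.
Variables (R : realType) (p : nat).

Definition table := 'I_p -> nat -> option R.

Definition learn (K : table) j tau v : table :=
  fun j' tau' => if (j' == j) && (tau' == tau) then Some v else K j' tau'.

Definition merge_tables (K : table) (ms : 'I_p -> option table) : table := fun j tau =>
  let heard k := obind (fun K' => K' j tau) (ms k) in
  if K j tau is Some v then Some v else obind heard [pick k | heard k != None].

Definition sound (y : 'I_p -> nat -> R) (K : table) : Prop :=
  forall j tau v, K j tau = Some v -> v = y j tau.

Lemma learn_self K j tau v : learn K j tau v j tau = Some v.
Proof. by rewrite /learn !eqxx. Qed.

Lemma learn_known K j tau v j' tau' :
  K j' tau' != None -> learn K j tau v j' tau' != None.
Proof. by rewrite /learn; case: ifP. Qed.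

Lemma learn_sound y K j tau : sound y K -> sound y (learn K j tau (y j tau)).
Proof.
move=> sK j' tau' v; rewrite /learn.
by case: ifP => [/andP[/eqP -> /eqP ->] [<-] //|_]; apply: sK.
Qed.

Lemma merge_sound y K ms : sound y K ->
  (forall k K', ms k = Some K' -> sound y K') -> sound y (merge_tables K ms).
Proof.
move=> sK sms j tau v; rewrite /merge_tables.
case Kjt: (K j tau) => [u|]; first by case=> <-; apply: sK Kjt.
case: pickP => // k _ /=; case msk: (ms k) => [K'|] //=; exact: sms msk j tau v.
Qed.

Lemma merge_known_self K ms j tau : K j tau != None -> merge_tables K ms j tau != None.
Proof. by rewrite /merge_tables; case: (K j tau). Qed.

Lemma merge_known_heard K ms j tau k K' :
  ms k = Some K' -> K' j tau != None -> merge_tables K ms j tau != None.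
Proof.
move=> msk K'_known; rewrite /merge_tables; case: (K j tau) => // .
by case: pickP => [//|/(_ k)]; rewrite /= msk K'_known.
Qed.

Variables (n : nat) (o : nat -> table -> 'cV[R]_n).

(* A node's state is its clock and the table of the measurements it has
   learnt so far; it forwards the whole table, extended by its current
   measurement, to its neighbours. *)
Definition flood : algorithm R p n :=
  @Algorithm R p n (nat * table)%type table (fun _ => (0%N, fun _ _ => None))
    (fun j _ z v => learn z.2 j z.1 v)
    (fun i z v ms => (z.1.+1, merge_tables (learn z.2 i z.1 v) ms))
    (fun _ z _ => o z.1 z.2).

Variables (adj : rel 'I_p) (y : 'I_p -> nat -> R).

Lemma run_clock t i : (run adj flood y t i).1 = t.
Proof. by elim: t i => //= t IH i; rewrite IH. Qed.

Lemma estimate_flood i t : estimate adj flood y i t = o t (run adj flood y t i).2.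
Proof. by rewrite /estimate /= run_clock. Qed.

Lemma run_sound t i : sound y (run adj flood y t i).2.
Proof.
elim: t i => [|t IH] i //=; rewrite run_clock.
apply: merge_sound => [|k K']; first exact: learn_sound.
by case: (adj i k) => // -[<-]; rewrite run_clock; apply: learn_sound.
Qed.

Lemma run_known t i s tau : path adj i s -> (tau + size s < t)%N ->
  (run adj flood y t i).2 (last i s) tau != None.
Proof.
elim: t i s => // t IH i [|k s] /=.
  move=> _; rewrite addn0 ltnS leq_eqVlt => /orP[/eqP ->|lt_tau_t].
    by apply: merge_known_self; rewrite run_clock learn_self.
  by apply/merge_known_self/learn_known; have := IH i [::] isT; rewrite /= addn0; apply.
case/andP=> adj_ik path_ks; rewrite addnS ltnS => lt_tau_t.
apply: (@merge_known_heard _ _ _ _ k); first by rewrite adj_ik.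
by apply/learn_known/IH.
Qed.

Lemma connect_short_path : (forall i j, connect adj i j) ->
  forall i j, exists2 s, path adj i s & last i s = j /\ (size s < p)%N.
Proof.
move=> conn i j; have /connectP[s0 path_s0 ->] := conn i j.
case: (shortenP path_s0) => s path_s uniq_s _; exists s => //; split=> //.
by have := max_card (mem (i :: s)); rewrite (card_uniqP uniq_s) card_ord.
Qed.

Lemma flood_complete : (forall i j, connect adj i j) ->
  forall t i j tau, (tau + p <= t)%N -> (run adj flood y t i).2 j tau = Some (y j tau).
Proof.
move=> conn t i j tau le_t; have [s path_s [<- size_s]] := connect_short_path conn i j.
case E: (run adj flood y t i).2 => [v|]; first by rewrite -(run_sound E).
suff: (run adj flood y t i).2 (last i s) tau != None by rewrite E.
by apply: run_known => //; apply: leq_trans le_t; rewrite ltn_add2l.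
Qed.

End Flooding.

Lemma nonincreasing_sets_stable (T : finType) (G : nat -> {set T}) :
  (forall t, G t.+1 \subset G t) -> exists t0, forall t, (t0 <= t)%N -> G t = G t0.
Proof.
move=> G_next; have G_le t t' : (t <= t')%N -> G t' \subset G t.
  move=> le_tt'; rewrite -(subnK le_tt'); elim: (t' - t)%N => [//|d IH].
  exact: fintype.subset_trans (G_next _) IH.
have [m /asboolP[t0 card_t0] m_min] := ex_minnP (ex_intro
  (fun m => `[< exists t, #|G t| = m >]) _ (asboolT (ex_intro _ 0%N erefl))).
exists t0 => t le_t0t; apply/eqP; rewrite eqEcard G_le //= card_t0.
by apply: m_min; apply/asboolP; exists t.
Qed.

Lemma set_split_half (T : finType) (V : {set T}) s : (#|V| <= 2 * s)%N ->
  exists V1 V2 : {set T}, [/\ V = V1 :|: V2, (#|V1| <= s)%N & (#|V2| <= s)%N].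
Proof.
move=> card_V.
have : (0 < #|[set W : {set T} | W \subset V & #|W| == minn s #|V|]%SET|)%N.
  by rewrite cards_draws bin_gt0 geq_minr.
case/card_gt0P => V1; rewrite inE => /andP[sub_V1 /eqP card_V1].
exists V1, (V :\: V1); split.
- by rewrite -{1}(finset.setID V V1) (finset.setIidPr sub_V1).
- by rewrite card_V1 geq_minl.
- by rewrite cardsDS // card_V1; lia.
Qed.

Section SparseDetectability.
Variable R : realType.

Lemma in_Qk_diag p k (K : {set 'I_p}) :
  (#|~: K| <= k)%N -> in_Qk k (diag_mx (\row_j ((j \in K)%:R : R))).
Proof.
move=> card_K; exists (~: K); split=> // w; split.
  move=> /matrixP Lw j; rewrite inE negbK => jK.
  by have := Lw j 0; rewrite mul_diag_mx !mxE jK mul1r.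
move=> w0; apply/matrixP => a b; rewrite (ord1 b) mul_diag_mx !mxE.
by case: (boolP (a \in K)) => aK; rewrite ?mul0r // w0 ?mulr0 // inE negbK.
Qed.

Lemma sparse_detectable_vanishing n p k (A : 'M[R]_n)
    (C : 'M[R]_(p, n)) (K : {set 'I_p}) (w : 'cV[R]_n) :
  sparse_detectable k A C -> (#|~: K| <= k)%N ->
  (forall t j, j \in K -> row j C *m (A ^+ t *m w) = 0) -> vanishing A w.
Proof.
move=> sdet card_K Kw0; have := sdet _ _ (in_Qk_diag card_K).
move/detectable_unobservable_vanishing; apply => t; apply/matrixP => a b.
rewrite -mulmxA mul_diag_mx mxE mxE; case: (boolP (a \in K)) => aK; last by rewrite mul0r mxE.
by have /matrixP/(_ 0 b) := Kw0 t a aK; rewrite mul1r -row_mul !mxE => ->.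
Qed.

End SparseDetectability.

Section Estimator.
Variables (R : realType) (n p s : nat) (A : 'M[R]_n) (C : 'M[R]_(p, n)).
Implicit Types (D y : 'I_p -> nat -> R) (K : {set 'I_p}) (x : 'cV[R]_n).

Definition consistent D T K x : Prop :=
  forall j, j \in K -> forall tau, (tau <= T)%N -> row j C *m (A ^+ tau *m x) = (D j tau)%:M.

Definition plausible D T K : bool :=
  (#|~: K| <= s)%N && `[< exists x, consistent D T K x >].

Definition xhat D T : 'cV[R]_n :=
  if [pick K | plausible D T K] is Some K then xget 0 (consistent D T K) else 0.

Lemma consistent_ext D1 D2 T :
  (forall j tau, (tau <= T)%N -> D1 j tau = D2 j tau) -> consistent D1 T = consistent D2 T.
Proof.
move=> D12; apply/funext => K; apply/funext => x; apply/propext.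
by split=> cons j jK tau le_tau; rewrite (cons j jK tau le_tau) D12.
Qed.

Lemma xhat_ext D1 D2 T :
  (forall j tau, (tau <= T)%N -> D1 j tau = D2 j tau) -> xhat D1 T = xhat D2 T.
Proof. by move=> D12; rewrite /xhat /plausible (consistent_ext D12). Qed.

Lemma consistent_le D T T' K x :
  (T' <= T)%N -> consistent D T K x -> consistent D T' K x.
Proof. by move=> le_T cons j jK tau le_tau; apply: cons (leq_trans le_tau le_T). Qed.

Lemma plausible_le D T T' K : (T' <= T)%N -> plausible D T K -> plausible D T' K.
Proof.
move=> le_T /andP[card_K /asboolP[x cons]]; rewrite /plausible card_K; apply/asboolP.
by exists x; apply: consistent_le cons.
Qed.

(* By Cayley-Hamilton, agreeing with a consistent state up to time n means
   agreeing with it forever. *)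
Lemma consistent_extend D T K x x1 : (n <= T)%N ->
  consistent D T K x1 -> consistent D n K x -> consistent D T K x.
Proof.
move=> le_nT cons1 cons j jK.
have /unobservable_first_powers same : forall t, (t < n)%N ->
    row j C *m (A ^+ t *m (x - x1)) = 0.
  move=> t lt_tn; rewrite !mulmxBr (cons _ jK _ (ltnW lt_tn)).
  by rewrite (cons1 _ jK _ (leq_trans (ltnW lt_tn) le_nT)) subrr.
move=> tau le_tau; rewrite -(cons1 _ jK _ le_tau).
by apply/eqP; rewrite -subr_eq0 -!mulmxBr same.
Qed.

Variables (y : 'I_p -> nat -> R) (x0 : 'cV[R]_n) (H : {set 'I_p}).
Hypotheses (card_H : (#|~: H| <= s)%N) (x0_cons : forall T, consistent y T H x0).

Lemma pick_plausible_stable : exists K T0, (forall T, plausible y T K) /\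
  forall T, (T0 <= T)%N -> [pick K | plausible y T K] = Some K.
Proof.
pose G T := [set K | plausible y T K]%SET.
have H_in_G T : H \in G T.
  by rewrite inE; apply/andP; split=> //; apply/asboolP; exists x0.
have G_next T : G T.+1 \subset G T.
  by apply/fintype.subsetP => K; rewrite !inE; apply: plausible_le.
have [T0 G_T0] := nonincreasing_sets_stable G_next.
have [K K_T0 pick_T0] : exists2 K, K \in G T0 & [pick K in G T0] = Some K.
  by case: pickP => [K|/(_ H)]; [exists K | rewrite H_in_G].
exists K, T0; split=> [T|T le_T].
  have [le_T0T|lt_TT0] := leqP T0 T; first by have := K_T0; rewrite -(G_T0 _ le_T0T) inE.
  by apply: (plausible_le (ltnW lt_TT0)); rewrite inE in K_T0.
by rewrite -pick_T0; apply: eq_pick => K'; rewrite -(G_T0 _ le_T) inE.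
Qed.

Lemma xhat_stable : exists xs K T1, [/\ (#|~: K| <= s)%N,
  forall T, consistent y T K xs & forall T, (T1 <= T)%N -> xhat y T = xs].
Proof.
have [K [T0 [K_plaus pick_K]]] := pick_plausible_stable.
have cons_n T : (n <= T)%N -> consistent y T K = consistent y n K.
  move=> le_nT; have /andP[_ /asboolP[x1 cons1]] := K_plaus T.
  apply/funext => x; apply/propext; split; first exact: consistent_le.
  exact: consistent_extend cons1.
have /andP[card_K /asboolP ex_cons] := K_plaus n.
exists (xget 0 (consistent y n K)), K, (maxn T0 n); split=> // [T|T].
  have [le_nT|lt_Tn] := leqP n T; first by rewrite cons_n //; apply: xgetPex.
  by apply: consistent_le (ltnW lt_Tn) (xgetPex _ ex_cons).
rewrite geq_max => /andP[le_T0T le_nT].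
by rewrite /xhat pick_K // cons_n.
Qed.

End Estimator.

Section Sufficiency.
Variables (R : realType) (n p s : nat) (A : 'M[R]_n) (C : 'M[R]_(p, n)).

Lemma sparse_detectable_solvable (adj : rel 'I_p) : (forall i j, connect adj i j) ->
  sparse_detectable (2 * s) A C -> DSST_solvable A C adj s.
Proof.
move=> conn sdet.
(* Measurements up to time t - p have reached every node by time t. *)
pose o t (K : table R p) := A ^+ t *m xhat s A C (fun j tau => odflt 0 (K j tau)) (t - p).
exists (flood o) => x0 S e card_S e0 i; set y := meas A C x0 e.
have x0_cons T : consistent A C y T (~: S) x0.
  move=> j; rewrite inE => jS tau _; rewrite /y /meas e0 // addr0; exact: mx11_scalar.
have card_CS : (#|~: ~: S| <= s)%N by rewrite finset.setCK.
have [xs [K [T1 [card_K xs_cons xhatE]]]] := xhat_stable card_CS x0_cons.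
have vanish : vanishing A (xs - x0).
  apply: (sparse_detectable_vanishing (K := K :&: ~: S)) sdet _ _.
    rewrite finset.setCI finset.setCK mul2n -addnn.
    exact: leq_trans (leq_card_setU _ _).1 (leq_add card_K card_S).
  move=> t j; rewrite inE => /andP[jK jS].
  by rewrite !mulmxBr (xs_cons t j jK t (leqnn t)) (x0_cons t j jS t (leqnn t)) subrr.
apply: cvg_trans vanish; apply: near_eq_cvg; near=> t.
have le_t : (T1 + p <= t)%N by near: t; apply: nbhs_infty_ge.
have data_t j tau : (tau <= t - p)%N ->
    odflt 0 ((run adj (flood o) y t i).2 j tau) = y j tau.
  by move=> le_tau; rewrite flood_complete //; lia.
by rewrite estimate_flood /o (xhat_ext s A C data_t) xhatE /traj ?mulmxBr //; lia.
Unshelve. all: by end_near.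
Qed.

End Sufficiency.

Section Necessity.
Variables (R : realType) (n p s : nat) (A : 'M[R]_n) (C : 'M[R]_(p, n)).
Variable adj : rel 'I_p.
Hypotheses (p_gt0 : (0 < p)%N) (solvable : DSST_solvable A C adj s).

(* Attacking V1 from the initial state w and V2 from the initial state 0
   produces the same measurements, so a correct estimate must track both. *)
Lemma solvable_masked_vanishing (V1 V2 : {set 'I_p}) (w : 'cV[R]_n) :
  (#|V1| <= s)%N -> (#|V2| <= s)%N ->
  (forall t j, j \notin V1 :|: V2 -> row j C *m (A ^+ t *m w) = 0) -> vanishing A w.
Proof.
move=> card_V1 card_V2 w_hidden; have [alg track] := solvable.
pose z j t := (row j C *m (A ^+ t *m w)) 0 0.
pose e1 j t := if j \in V1 then - z j t else 0.
pose e2 j t := if j \in V1 then 0 else z j t.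
have e1_0 j : j \notin V1 -> forall t, e1 j t = 0 by rewrite /e1 => /negbTE ->.
have e2_0 j : j \notin V2 -> forall t, e2 j t = 0.
  move=> jV2 t; rewrite /e2; case: ifP => // jV1.
  by rewrite /z w_hidden ?mxE // inE jV1 (negbTE jV2).
have same_meas : meas A C w e1 = meas A C 0 e2.
  apply/funext => j; apply/funext => t; rewrite /meas /traj -/(z j t) !mulmx0 mxE add0r.
  by rewrite /e1 /e2; case: (j \in V1); rewrite ?addrN ?addr0.
pose i0 : 'I_p := Ordinal p_gt0.
have track_w := track w V1 e1 card_V1 e1_0 i0.
have track_0 := track 0 V2 e2 card_V2 e2_0 i0.
rewrite same_meas in track_w.
set E := estimate adj alg (meas A C 0 e2) i0 in track_w track_0.
have track_sum : (fun t => `|E t - traj A 0 t| + `|E t - traj A w t|) @ \oo --> (0 : R).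
  by rewrite -[0 : R](addr0 0); apply: cvgD.
apply: (squeeze_cvgr _ (cvg_cst (0 : R)) track_sum); near=> t.
rewrite normr_ge0 /= /traj mulmx0 subr0.
rewrite [X in `|X| <= _](_ : _ = E t - (E t - A ^+ t *m w)) ?ler_normB //.
by rewrite opprB addrC subrK.
Unshelve. all: by end_near.
Qed.

Lemma solvable_sparse_detectable : sparse_detectable (2 * s) A C.
Proof.
move=> r L [V [card_V kerL]] mu v v_neq0 Av mu_ge1; apply/negP => /eqP LCv0.
have [V1 [V2 [defV card_V1 card_V2]]] := set_split_half card_V.
have hidden u : unobservable A (L *m C) u -> vanishing A u.
  move=> unobs_u; apply: (solvable_masked_vanishing card_V1 card_V2) => t j.
  rewrite -defV => jV; have /kerL/(_ j jV) : L *m (C *m (A ^+ t *m u)) = 0.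
    by rewrite mulmxA unobs_u.
  by move=> Cu0; apply/matrixP => a b; rewrite !ord1 -row_mul mxE Cu0 mxE.
have [unobs_re unobs_im] := eigenvector_parts_unobservable Av LCv0.
apply: (eigenvector_parts_not_vanishing Av v_neq0 mu_ge1).
by split; [apply: hidden unobs_re | apply: hidden unobs_im].
Qed.

End Necessity.

Theorem theorem1 (R : realType) (n p s : nat) (A : 'M[R]_n) (C : 'M[R]_(p, n))
    (adj : rel 'I_p) :
  (0 < p)%N ->
  symmetric adj ->
  irreflexive adj ->
  (forall i j : 'I_p, connect adj i j) ->
  cond_v A (laplacian R adj) ->
  (DSST_solvable A C adj s <-> sparse_detectable (2 * s) A C).
Proof.
move=> p_gt0 _ _ conn _; split=> [solvable|].
  exact: solvable_sparse_detectable p_gt0 solvable.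
exact: sparse_detectable_solvable conn.
Qed.
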